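(* For the quasi-random router model for any transition matrix $P$ and any initial configuration with $M$ tokens in total, $\Psi_\sigma\le 2\lg(M+1)$.
   Context: $V=\{1,\dots,N\}$, $P$ a stochastic $N\times N$ matrix, $\mathcal N(v)=\{u:P_{v,u}>0\}$, $\delta(v)=|\mathcal N(v)|$; $\lg=\log_2$. The van der Corput function $\psi:\mathbb{Z}_{\ge0}\to[0,1)$ is $\psi(0)=0$ and, for $i>0$ written in binary as $i=\sum_{j=0}^{\lfloor\lg i\rfloor}\beta_j(i)2^j$, $\psi(i)=\sum_{j}\beta_j(i)2^{-(j+1)}$. The quasi-random router: fix an ordering $u_1,\dots,u_{\delta(v)}$ of $\mathcal N(v)$ and set $\sigma_v(i)=u_k$ where $\sum_{j=1}^{k-1}P_{v,u_j}\le\psi(i)<\sum_{j=1}^{k}P_{v,u_j}$. $I_{v,u}[z,z')=|\{j\in\{z,\dots,z'-1\}:\sigma_v(j)=u\}|$ (zero if $z'\le z$). Given $\chi^{(0)}\in\mathbb{Z}_{\ge0}^N$ with $\sum_v\chi^{(0)}_v=M$, set $Z^{(t)}_{v,u}=I_{v,u}\big[\sum_{s=0}^{t-1}\chi^{(s)}_v,\sum_{s=0}^{t}\chi^{(s)}_v\big)$, $\chi^{(t+1)}_u=\sum_vZ^{(t)}_{v,u}$; $\Psi_\sigma=\sup_{v,\,u\in\mathcal N(v),\,t\ge0}|Z^{(t)}_{v,u}-\chi^{(t)}_vP_{v,u}|$. *)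

(* classical reals. Vertices are 0..N-1 (paper: 1..N). *)
From Stdlib Require Import Reals Lra Lia Arith List.
Import ListNotations.
Open Scope R_scope.

Definition lg (x : R) : R := ln x / ln 2.

(* van der Corput: psi i = sum_{j=0}^{floor(lg i)} beta_j(i) 2^{-(j+1)}; psi 0 = 0 *)
Definition vdc (i : nat) : R :=
  match i with
  | O => 0
  | S _ => fold_right Rplus 0
      (map (fun j => if Nat.testbit i j then / 2 ^ (S j) else 0)
           (seq 0 (S (Nat.log2 i))))
  end.

Definition rsum (l : list nat) (f : nat -> R) : R := fold_right Rplus 0 (map f l).
Definition nsum (l : list nat) (f : nat -> nat) : nat := fold_right Nat.add 0%nat (map f l).

(* Given the ordering l = [u_1; ...; u_d] of N(v), return the first u_k with
   x < P v u_1 + ... + P v u_k, where acc is the sum of the preceding weights.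
   (With positive weights this is exactly the u_k with
   sum_{j<k} P v u_j <= x < sum_{j<=k} P v u_j, for x >= 0.)
   The default dflt is never reached when x < 1 = total weight. *)
Fixpoint pick (P : nat -> nat -> R) (v : nat) (l : list nat) (acc x : R) (dflt : nat) : nat :=
  match l with
  | [] => dflt
  | u :: l' => if Rlt_dec x (acc + P v u) then u else pick P v l' (acc + P v u) x dflt
  end.

Definition sigma (P : nat -> nat -> R) (ord : nat -> list nat) (v i : nat) : nat :=
  pick P v (ord v) 0 (vdc i) v.

Definition Icount (P : nat -> nat -> R) (ord : nat -> list nat) (v u z z' : nat) : nat :=
  length (filter (fun j => Nat.eqb (sigma P ord v j) u) (seq z (z' - z))).

(* conf t = (chi^(t), fun v => sum_{s<t} chi^(s)_v) *)
Fixpoint conf (N : nat) (P : nat -> nat -> R) (ord : nat -> list nat)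
    (chi0 : nat -> nat) (t : nat) : (nat -> nat) * (nat -> nat) :=
  match t with
  | O => (chi0, fun _ => 0%nat)
  | S t' =>
      let (c, s) := conf N P ord chi0 t' in
      (fun u => nsum (seq 0 N) (fun v => Icount P ord v u (s v) (s v + c v)),
       fun v => (s v + c v)%nat)
  end.

Definition chi N P ord chi0 t : nat -> nat := fst (conf N P ord chi0 t).

Definition Zflow N P ord chi0 (t v u : nat) : nat :=
  let s := snd (conf N P ord chi0 t) in
  let c := fst (conf N P ord chi0 t) in
  Icount P ord v u (s v) (s v + c v).

(* With the neighbours of v listed as u_1, ..., u_d, the router
   sends the j-th token leaving v to u iff psi(j) falls into a fixed interval
   [a, a + P_{v,u}) of [0,1).  Hence Z^(t)_{v,u} - chi^(t)_v P_{v,u} is the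
   discrepancy of the van der Corput sequence on [a, a + P_{v,u}) over a
   window of chi^(t)_v consecutive indices.
   - Van der Corput: psi(2i) = psi(i)/2, psi(2i+1) = 1/2 + psi(i)/2, so each
     aligned dyadic block of 2^k indices hits [0,x) about x 2^k times, with
     error in (-1, 0]; for [a,b) the block error is at most 1.
   - Block errors are additive under halving of blocks, so a window of c
     indices splits into at most 2 lg(c+1) whole dyadic blocks (peel at most
     one index at each end, then halve the window).
   - Tokens are conserved, so chi^(t)_v <= M, and lg is monotone.
   The file develops, in order: psi and its self-similarity; window sums;
   the dyadic block estimate; the window decomposition (for any bounded
   block-additive family); the router as an interval rule; conservation;
   and finally the lemma itself. *)

From Pilot Require Import Defs.
From Stdlib Require Import Reals Lra Lia Arith List Permutation.
Open Scope R_scope.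

(** * Van der Corput sequence *)

(* The first L binary digits of i, reflected: the van der Corput value of
   i mod 2^L, computed least significant digit first. *)
Fixpoint vdc_digits (L i : nat) : R :=
  match L with
  | O => 0
  | S L' => (if Nat.odd i then / 2 else 0) + vdc_digits L' (Nat.div2 i) / 2
  end.

Lemma fold_right_Rplus_half (h : nat -> R) (l : list nat) :
  fold_right Rplus 0 (map (fun j => h j / 2) l) = fold_right Rplus 0 (map h l) / 2.
Proof. induction l as [|x l IH]; simpl; [lra | rewrite IH; lra]. Qed.

Lemma vdc_digits_sum L i : vdc_digits L i =
  fold_right Rplus 0 (map (fun j => if Nat.testbit i j then / 2 ^ S j else 0) (seq 0 L)).
Proof.
  revert i; induction L as [|L IH]; intro i; [reflexivity|].
  cbn [vdc_digits seq map fold_right].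
  rewrite <- seq_shift, map_map, Nat.bit0_odd, IH, <- fold_right_Rplus_half.
  f_equal.
  - destruct (Nat.odd i); simpl; lra.
  - f_equal; apply map_ext; intro j.
    rewrite Nat.div2_div, Nat.div2_bits.
    destruct (Nat.testbit i (S j)); [|lra].
    assert (0 < 2 ^ S j) by (apply pow_lt; lra).
    change (2 ^ S (S j)) with (2 * 2 ^ S j). field; lra.
Qed.

Lemma vdc_digits_0 L : vdc_digits L 0 = 0.
Proof. induction L as [|L IH]; simpl; [|rewrite IH]; lra. Qed.

Lemma vdc_digits_bounds L i : 0 <= vdc_digits L i < 1.
Proof.
  revert i; induction L as [|L IH]; intro i; simpl; [lra|].
  destruct (IH (Nat.div2 i)); destruct (Nat.odd i); lra.
Qed.

Lemma vdc_digits_extend L d i : (i < 2 ^ L)%nat -> vdc_digits (L + d) i = vdc_digits L i.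
Proof.
  assert (step : forall L i, (i < 2 ^ L)%nat -> vdc_digits (S L) i = vdc_digits L i).
  { induction L0 as [|L0 IH]; intros i0 Hi.
    - simpl in Hi; replace i0 with 0%nat by lia; simpl; lra.
    - change (vdc_digits (S (S L0)) i0)
        with ((if Nat.odd i0 then / 2 else 0) + vdc_digits (S L0) (Nat.div2 i0) / 2).
      rewrite IH; [reflexivity|].
      pose proof (Nat.div2_odd i0); destruct (Nat.odd i0); simpl in *; lia. }
  revert L i; induction d as [|d IH]; intros L i Hi; [now rewrite Nat.add_0_r|].
  rewrite Nat.add_succ_r, step; [now apply IH|].
  apply Nat.lt_le_trans with (2 ^ L)%nat; [exact Hi|apply Nat.pow_le_mono_r; lia].
Qed.

Lemma vdc_digits_spec L i : (i < 2 ^ L)%nat -> vdc i = vdc_digits L i.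
Proof.
  intro Hi; destruct i as [|i]; [now rewrite vdc_digits_0|].
  unfold vdc; rewrite <- vdc_digits_sum.
  destruct (Nat.log2_spec (S i)) as [Hlo Hhi]; [lia|].
  assert (HL : (S (Nat.log2 (S i)) <= L)%nat).
  { destruct (Nat.le_gt_cases L (Nat.log2 (S i))) as [H|]; [|lia].
    assert (2 ^ L <= 2 ^ Nat.log2 (S i))%nat by (apply Nat.pow_le_mono_r; lia). lia. }
  replace L with (S (Nat.log2 (S i)) + (L - S (Nat.log2 (S i))))%nat by lia.
  rewrite vdc_digits_extend by exact Hhi; reflexivity.
Qed.

Lemma vdc_bounds i : 0 <= vdc i < 1.
Proof.
  rewrite (vdc_digits_spec i i) by (apply Nat.pow_gt_lin_r; lia).
  apply vdc_digits_bounds.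
Qed.

(* The self-similarity of psi that drives the whole discrepancy estimate. *)
Lemma vdc_even i : vdc (2 * i) = vdc i / 2.
Proof.
  assert (Hi : (i < 2 ^ i)%nat) by (apply Nat.pow_gt_lin_r; lia).
  rewrite (vdc_digits_spec (S i) (2 * i)), (vdc_digits_spec i i) by (simpl; lia).
  cbn [vdc_digits]. rewrite Nat.odd_even, Nat.div2_double. lra.
Qed.

Lemma vdc_odd i : vdc (2 * i + 1) = / 2 + vdc i / 2.
Proof.
  assert (Hi : (i < 2 ^ i)%nat) by (apply Nat.pow_gt_lin_r; lia).
  rewrite (vdc_digits_spec (S i) (2 * i + 1)), (vdc_digits_spec i i) by (simpl; lia).
  cbn [vdc_digits]. rewrite Nat.odd_odd, Nat.add_1_r, Nat.div2_succ_double. lra.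
Qed.

Lemma rsum_cons l x f : rsum (x :: l) f = f x + rsum l f.
Proof. reflexivity. Qed.

Lemma rsum_app l1 l2 f : rsum (l1 ++ l2) f = rsum l1 f + rsum l2 f.
Proof. induction l1 as [|x l IH]; [unfold rsum; simpl; lra|]. simpl. rewrite !rsum_cons, IH; lra. Qed.

Lemma rsum_window_split f z c1 c2 :
  rsum (seq z (c1 + c2)) f = rsum (seq z c1) f + rsum (seq (z + c1) c2) f.
Proof. rewrite seq_app; apply rsum_app. Qed.

Lemma rsum_ext l f g : (forall j, f j = g j) -> rsum l f = rsum l g.
Proof. intro H; unfold rsum; f_equal; apply map_ext, H. Qed.

Lemma rsum_minus l f g : rsum l (fun j => f j - g j) = rsum l f - rsum l g.
Proof. induction l as [|x l IH]; [unfold rsum; simpl; lra|]. rewrite !rsum_cons, IH; lra. Qed.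

Lemma rsum_plus l f g : rsum l (fun j => f j + g j) = rsum l f + rsum l g.
Proof. induction l as [|x l IH]; [unfold rsum; simpl; lra|]. rewrite !rsum_cons, IH; lra. Qed.

Lemma rsum_const l k : rsum l (fun _ => k) = INR (length l) * k.
Proof.
  induction l as [|x l IH]; [unfold rsum; simpl; lra|].
  rewrite rsum_cons, IH; cbn [length]; rewrite S_INR; lra.
Qed.

Lemma rsum_abs_le l f : (forall j, Rabs (f j) <= 1) -> Rabs (rsum l f) <= INR (length l).
Proof.
  intro H; induction l as [|x l IH]; [unfold rsum; simpl; rewrite Rabs_R0; lra|].
  rewrite rsum_cons; cbn [length]; rewrite S_INR.
  eapply Rle_trans; [apply Rabs_triang|]. specialize (H x); lra.
Qed.

Lemma rsum_nonneg l f : (forall x, In x l -> 0 <= f x) -> 0 <= rsum l f.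
Proof.
  induction l as [|x l IH]; intro H; [unfold rsum; simpl; lra|].
  rewrite rsum_cons. pose proof (H x (or_introl eq_refl)).
  pose proof (IH (fun y Hy => H y (or_intror Hy))). lra.
Qed.

Lemma rsum_perm l l' f : Permutation l l' -> rsum l f = rsum l' f.
Proof. intro H; induction H; unfold rsum in *; simpl in *; lra. Qed.

Lemma rsum_filter (p : nat -> bool) l f :
  (forall x, In x l -> p x = false -> f x = 0) -> rsum (filter p l) f = rsum l f.
Proof.
  induction l as [|x l IH]; intro H; [reflexivity|].
  simpl; rewrite rsum_cons; destruct (p x) eqn:E.
  - rewrite rsum_cons, IH; [reflexivity|]; intros; apply H; simpl; auto.
  - rewrite IH by (intros; apply H; simpl; auto). rewrite (H x) by (simpl; auto); lra.
Qed.

Lemma rsum_window_pairs f z c :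
  rsum (seq (2 * z) (2 * c)) f = rsum (seq z c) (fun m => f (2 * m)%nat + f (2 * m + 1)%nat).
Proof.
  revert z; induction c as [|c IH]; intro z; [reflexivity|].
  replace (2 * S c)%nat with (S (S (2 * c))) by lia.
  cbn [seq]; rewrite !rsum_cons.
  replace (S (S (2 * z))) with (2 * S z)%nat by lia.
  rewrite IH, Nat.add_1_r; lra.
Qed.

Lemma length_filter_rsum (p : nat -> bool) l :
  INR (length (filter p l)) = rsum l (fun j => if p j then 1 else 0).
Proof.
  induction l as [|j l IH]; [reflexivity|].
  simpl filter; rewrite rsum_cons, <- IH.
  destruct (p j); cbn [length]; [rewrite S_INR|]; lra.
Qed.

(** * Discrepancy of van der Corput on dyadic blocks *)

Definition below (x : R) (j : nat) : R := if Rlt_dec (vdc j) x then 1 else 0.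

Lemma below_pair x j :
  below x (2 * j) + below x (2 * j + 1) = below (2 * x) j + below (2 * x - 1) j.
Proof.
  unfold below; rewrite vdc_even, vdc_odd.
  destruct (Rlt_dec (vdc j / 2) x), (Rlt_dec (vdc j) (2 * x)),
    (Rlt_dec (/ 2 + vdc j / 2) x), (Rlt_dec (vdc j) (2 * x - 1)); lra.
Qed.

Definition block (k m : nat) : list nat := seq (m * 2 ^ k) (2 ^ k).

(* On a dyadic block, #{j : psi(j) < x} = x 2^k - psi(m) up to an error in
   [0, 1): the block's psi-values are psi(m)/2^k + (multiples of 1/2^k). *)
Lemma below_block_count k m x : 0 <= x <= 1 ->
  rsum (block k m) (below x) - 1 < x * INR (2 ^ k) - vdc m
  <= rsum (block k m) (below x).
Proof.
  unfold block; revert m x; induction k as [|k IH]; intros m x Hx.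
  - rewrite Nat.pow_0_r, Nat.mul_1_r; cbn [seq]; unfold rsum, below; simpl.
    destruct (vdc_bounds m); destruct (Rlt_dec (vdc m) x); lra.
  - change (2 ^ S k)%nat with (2 * 2 ^ k)%nat.
    replace (m * (2 * 2 ^ k))%nat with (2 * (m * 2 ^ k))%nat by ring.
    rewrite rsum_window_pairs, (rsum_ext _ _ _ (below_pair x)), rsum_plus, mult_INR.
    simpl (INR 2).
    destruct (Rle_lt_dec x (/ 2)) as [Hx2|Hx2].
    + rewrite (rsum_ext _ (below (2 * x - 1)) (fun _ => 0)), rsum_const.
      2: { intro j; unfold below; destruct (vdc_bounds j).
           destruct (Rlt_dec (vdc j) (2 * x - 1)); lra. }
      specialize (IH m (2 * x) ltac:(lra)). nra.
    + rewrite (rsum_ext _ (below (2 * x)) (fun _ => 1)), rsum_const, length_seq.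
      2: { intro j; unfold below; destruct (vdc_bounds j).
           destruct (Rlt_dec (vdc j) (2 * x)); lra. }
      specialize (IH m (2 * x - 1) ltac:(lra)). nra.
Qed.

Definition hits (a b : R) (j : nat) : R := below b j - below a j.

Definition block_error (a b : R) (k m : nat) : R :=
  rsum (block k m) (hits a b) - INR (2 ^ k) * (b - a).

Lemma block_error_bound a b k m : 0 <= a <= 1 -> 0 <= b <= 1 ->
  Rabs (block_error a b k m) <= 1.
Proof.
  intros Ha Hb; unfold block_error, hits; rewrite rsum_minus.
  pose proof (below_block_count k m b Hb); pose proof (below_block_count k m a Ha).
  apply Rabs_le; nra.
Qed.

(* A block of level k+1 is the union of two consecutive blocks of level k. *)
Lemma block_error_halve a b k m :
  block_error a b (S k) m = block_error a b k (2 * m) + block_error a b k (2 * m + 1).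
Proof.
  unfold block_error, block.
  change (2 ^ S k)%nat with (2 * 2 ^ k)%nat.
  replace (m * (2 * 2 ^ k))%nat with (2 * m * 2 ^ k)%nat by ring.
  replace (2 * 2 ^ k)%nat with (2 ^ k + 2 ^ k)%nat by lia.
  rewrite rsum_window_split, plus_INR.
  replace (2 * m * 2 ^ k + 2 ^ k)%nat with ((2 * m + 1) * 2 ^ k)%nat by ring.
  simpl (INR 2); ring.
Qed.

(** * Windows decompose into few dyadic blocks *)

Lemma parity_split n : exists h p, (p <= 1)%nat /\ n = (2 * h + p)%nat.
Proof. destruct (Nat.Even_or_Odd n) as [[h ->]|[h ->]]; [exists h, 0%nat | exists h, 1%nat]; lia. Qed.

Section DyadicWindow.

Variable E : nat -> nat -> R.
Hypothesis E_bound : forall k m, Rabs (E k m) <= 1.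
Hypothesis E_halve : forall k m, E (S k) m = E k (2 * m) + E k (2 * m + 1).

Lemma window_pairs k w d : rsum (seq (2 * w) (2 * d)) (E k) = rsum (seq w d) (E (S k)).
Proof. rewrite rsum_window_pairs; apply rsum_ext; intro; now rewrite E_halve. Qed.

(* Any window of c level-k cells sums to at most n in absolute value, with
   2^n <= (c+1)^2: peel at most one cell at each end (cost p + q), then the
   remaining window consists of d level-(k+1) cells, where c = 2d + p + q. *)
Lemma dyadic_window_bound c : forall z k,
  exists n, Rabs (rsum (seq z c) (E k)) <= INR n /\ (2 ^ n <= (c + 1) * (c + 1))%nat.
Proof.
  induction c as [c IH] using lt_wf_ind; intros z k.
  destruct c as [|c'].
  { exists 0%nat; unfold rsum; simpl; rewrite Rabs_R0; split; [lra|lia]. }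
  set (c := S c').
  destruct (parity_split z) as [h [p [Hp Hz]]].
  set (w := (h + p)%nat).
  assert (Hzw : (z + p = 2 * w)%nat) by (unfold w; lia).
  destruct (parity_split (c - p)) as [d [q [Hq Hc]]].
  destruct (IH d ltac:(lia) w (S k)) as [n [Hn Hpow]].
  exists (p + q + n)%nat; split.
  - replace c with (p + (2 * d + q))%nat by lia.
    rewrite rsum_window_split, Hzw, rsum_window_split, window_pairs.
    pose proof (rsum_abs_le (seq z p) _ (E_bound k)).
    pose proof (rsum_abs_le (seq (2 * w + 2 * d) q) _ (E_bound k)).
    rewrite length_seq in *; rewrite !plus_INR.
    eapply Rle_trans; [apply Rabs_triang|].
    eapply Rle_trans; [apply Rplus_le_compat_l, Rabs_triang|]. lra.
  - rewrite !Nat.pow_add_r.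
    assert (2 ^ p * 2 ^ q * (d + 1) * (d + 1) <= (c + 1) * (c + 1))%nat
      by (destruct p as [|[|]], q as [|[|]]; simpl; nia).
    nia.
Qed.

End DyadicWindow.

Lemma ln2_pos : 0 < ln 2.
Proof. rewrite <- ln_1; apply ln_increasing; lra. Qed.

Lemma lg_le x y : 0 < x -> x <= y -> lg x <= lg y.
Proof.
  intros Hx Hxy; unfold lg, Rdiv; apply Rmult_le_compat_r.
  - left; apply Rinv_0_lt_compat, ln2_pos.
  - destruct Hxy as [Hlt|Heq]; [left; apply ln_increasing|rewrite Heq]; lra.
Qed.

Lemma exponent_le_2lg n c : (2 ^ n <= (c + 1) * (c + 1))%nat -> INR n <= 2 * lg (INR c + 1).
Proof.
  intro H; apply le_INR in H.
  rewrite pow_INR, mult_INR, plus_INR in H; replace (INR 2) with 2 in H by (simpl; lra).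
  simpl (INR 1) in H.
  pose proof (pos_INR c); pose proof ln2_pos.
  assert (Hln : INR n * ln 2 <= ln ((INR c + 1) * (INR c + 1))).
  { rewrite <- ln_pow by lra.
    destruct H as [Hlt|Heq]; [left; apply ln_increasing; [apply pow_lt|]|rewrite Heq]; lra. }
  rewrite ln_mult in Hln by lra.
  unfold lg; apply Rmult_le_reg_r with (ln 2); [lra|].
  replace (2 * (ln (INR c + 1) / ln 2) * ln 2) with (2 * ln (INR c + 1)) by (field; lra).
  lra.
Qed.

Theorem vdc_window_discrepancy a b z c : 0 <= a <= 1 -> 0 <= b <= 1 ->
  Rabs (rsum (seq z c) (hits a b) - INR c * (b - a)) <= 2 * lg (INR c + 1).
Proof.
  intros Ha Hb.
  destruct (dyadic_window_bound (block_error a b) (fun k m => block_error_bound a b k m Ha Hb)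
              (block_error_halve a b) c z 0) as [n [Hn Hpow]].
  assert (Hlevel0 : rsum (seq z c) (block_error a b 0)
                    = rsum (seq z c) (hits a b) - INR c * (b - a)).
  { rewrite <- (length_seq c z) at 3; rewrite <- rsum_const, <- rsum_minus.
    apply rsum_ext; intro j; unfold block_error, block; rewrite Nat.pow_0_r, Nat.mul_1_r; unfold rsum; simpl; ring. }
  rewrite <- Hlevel0; eapply Rle_trans; [exact Hn|]; now apply exponent_le_2lg.
Qed.

(** * The router as an interval rule *)

Section Router.
Variable (P : nat -> nat -> R) (v : nat).

Lemma pick_in l acc x d : acc <= x -> x < acc + rsum l (P v) -> In (pick P v l acc x d) l.
Proof.
  revert acc; induction l as [|w l IH]; intros acc H1 H2.
  - unfold rsum in H2; simpl in H2; lra.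
  - rewrite rsum_cons in H2; cbn [pick]; destruct (Rlt_dec x (acc + P v w)).
    + now left.
    + right; apply IH; lra.
Qed.

Lemma pick_interval l acc u d : NoDup l -> In u l -> (forall w, In w l -> 0 <= P v w) ->
  exists a, acc <= a /\ a + P v u <= acc + rsum l (P v) /\
    forall x, acc <= x -> x < acc + rsum l (P v) ->
      (pick P v l acc x d = u <-> a <= x < a + P v u).
Proof.
  revert acc; induction l as [|w l IH]; intros acc Hnd Hin Hnn; [destruct Hin|].
  inversion Hnd as [|? ? Hw Hnd']; subst.
  assert (Hl : 0 <= rsum l (P v)) by (apply rsum_nonneg; intros; apply Hnn; simpl; auto).
  assert (Hpw : 0 <= P v w) by (apply Hnn; simpl; auto).
  rewrite rsum_cons.
  destruct (Nat.eq_dec w u) as [->|Hne].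
  - exists acc; split; [lra|]; split; [lra|]; intros x H1 H2; split.
    + intro Hpick; cbn [pick] in Hpick; destruct (Rlt_dec x (acc + P v u)); [lra|].
      assert (Hi : In (pick P v l (acc + P v u) x d) l) by (apply pick_in; lra).
      rewrite Hpick in Hi; contradiction.
    + intros [_ Hx]; cbn [pick]; destruct (Rlt_dec x (acc + P v u)); [reflexivity|lra].
  - destruct Hin as [|Hin]; [contradiction|].
    destruct (IH (acc + P v w) Hnd' Hin) as [a [Ha1 [Ha2 Ha3]]];
      [intros; apply Hnn; simpl; auto|].
    exists a; split; [lra|]; split; [lra|]; intros x H1 H2.
    cbn [pick]; destruct (Rlt_dec x (acc + P v w)).
    + split; [intro; congruence|intros; lra].
    + apply Ha3; lra.
Qed.
End Router.

Lemma neighbour_weights_sum N (P : nat -> nat -> R) (ord : nat -> list nat) v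
    (HPnn : forall u, (u < N)%nat -> 0 <= P v u)
    (HProw : rsum (seq 0 N) (P v) = 1)
    (Hnodup : NoDup (ord v))
    (Hnbr : forall u, In u (ord v) <-> ((u < N)%nat /\ 0 < P v u)) :
  rsum (ord v) (P v) = 1.
Proof.
  set (pos := fun w => if Rlt_dec 0 (P v w) then true else false).
  rewrite <- HProw, (rsum_perm (ord v) (filter pos (seq 0 N))).
  - apply rsum_filter; intros x Hx Hpx; unfold pos in Hpx.
    destruct (Rlt_dec 0 (P v x)); [discriminate|].
    apply in_seq in Hx; pose proof (HPnn x ltac:(lia)); lra.
  - apply NoDup_Permutation; [exact Hnodup|apply NoDup_filter, seq_NoDup|].
    intro x; rewrite filter_In, in_seq, Hnbr; unfold pos.
    destruct (Rlt_dec 0 (P v x)); intuition (try lia; try discriminate).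
Qed.

Lemma router_interval N P ord v u
    (HPnn : forall w, (w < N)%nat -> 0 <= P v w)
    (HProw : rsum (seq 0 N) (P v) = 1)
    (Hnodup : NoDup (ord v))
    (Hnbr : forall w, In w (ord v) <-> ((w < N)%nat /\ 0 < P v w))
    (Hu : (u < N)%nat) (Hp : 0 < P v u) :
  exists a, 0 <= a /\ a + P v u <= 1 /\
    forall j, (if Nat.eqb (Defs.sigma P ord v j) u then 1 else 0) = hits a (a + P v u) j.
Proof.
  assert (Hsum := neighbour_weights_sum N P ord v HPnn HProw Hnodup Hnbr).
  assert (Hin : In u (ord v)) by (apply Hnbr; auto).
  assert (Hnn : forall w, In w (ord v) -> 0 <= P v w) by (intros w Hw; apply Hnbr in Hw; lra).
  destruct (pick_interval P v (ord v) 0 u v Hnodup Hin Hnn) as [a [Ha1 [Ha2 Ha3]]].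
  rewrite Hsum in Ha2, Ha3.
  exists a; split; [lra|]; split; [lra|]; intro j.
  unfold Defs.sigma, hits, below; destruct (vdc_bounds j).
  specialize (Ha3 (vdc j) ltac:(lra) ltac:(lra)).
  destruct (Nat.eqb_spec (pick P v (ord v) 0 (vdc j) v) u) as [E|E];
    [apply Ha3 in E|rewrite Ha3 in E];
    destruct (Rlt_dec (vdc j) (a + P v u)), (Rlt_dec (vdc j) a);
    try (exfalso; apply E; split; lra); lra.
Qed.

(** * Token conservation *)

Lemma nsum_cons l x f : nsum (x :: l) f = (f x + nsum l f)%nat.
Proof. reflexivity. Qed.

Lemma nsum_ext l f g : (forall x, f x = g x) -> nsum l f = nsum l g.
Proof. intro H; unfold nsum; f_equal; apply map_ext, H. Qed.

Lemma nsum_add l f g : nsum l (fun x => f x + g x)%nat = (nsum l f + nsum l g)%nat.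
Proof. induction l; [reflexivity|]. rewrite !nsum_cons, IHl; lia. Qed.

Lemma nsum_zero l : nsum l (fun _ => 0%nat) = 0%nat.
Proof. induction l; [reflexivity|]. now rewrite nsum_cons, IHl. Qed.

Lemma nsum_swap l1 l2 (f : nat -> nat -> nat) :
  nsum l1 (fun a => nsum l2 (f a)) = nsum l2 (fun b => nsum l1 (fun a => f a b)).
Proof.
  induction l1 as [|a l1 IH]; [symmetry; apply nsum_zero|].
  rewrite nsum_cons, IH, <- nsum_add; apply nsum_ext; reflexivity.
Qed.

Lemma nsum_le_term l f x : In x l -> (f x <= nsum l f)%nat.
Proof.
  induction l as [|y l IH]; [intros []|]; intros [->|H]; rewrite nsum_cons; [lia|].
  specialize (IH H); lia.
Qed.

Lemma nsum_le_mono l f g : (forall x, f x <= g x)%nat -> (nsum l f <= nsum l g)%nat.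
Proof. intro H; induction l; [unfold nsum; simpl; lia|]. rewrite !nsum_cons; pose proof (H a); lia. Qed.

Lemma nsum_indicator_le_1 us x : NoDup us ->
  (nsum us (fun u => if Nat.eqb x u then 1 else 0) <= 1)%nat.
Proof.
  induction 1 as [|a us Ha Hnd IH]; [unfold nsum; simpl; lia|]. rewrite nsum_cons.
  destruct (Nat.eqb_spec x a) as [->|]; [|lia].
  enough (nsum us (fun u => if Nat.eqb a u then 1 else 0)%nat = 0%nat) by lia.
  clear IH Hnd; induction us as [|b us IHus]; [reflexivity|]; rewrite nsum_cons, IHus.
  - destruct (Nat.eqb_spec a b) as [->|]; [exfalso; apply Ha; now left|reflexivity].
  - intro; apply Ha; now right.
Qed.

(* Each j is counted for at most one target. *)
Lemma nsum_counts_le (f : nat -> nat) us js : NoDup us ->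
  (nsum us (fun u => length (filter (fun j => Nat.eqb (f j) u) js)) <= length js)%nat.
Proof.
  intro Hnd; induction js as [|j js IH]; [simpl; rewrite nsum_zero; lia|].
  rewrite (nsum_ext _ _ (fun u => (if Nat.eqb (f j) u then 1 else 0)
                           + length (filter (fun j => Nat.eqb (f j) u) js))%nat).
  - rewrite nsum_add; pose proof (nsum_indicator_le_1 us (f j) Hnd); simpl length; lia.
  - intro u; simpl; destruct (Nat.eqb (f j) u); reflexivity.
Qed.

Lemma chi_S N P ord chi0 t u : chi N P ord chi0 (S t) u =
  nsum (seq 0 N) (fun v => Icount P ord v u (snd (conf N P ord chi0 t) v)
     (snd (conf N P ord chi0 t) v + chi N P ord chi0 t v)).
Proof. unfold chi; cbn [conf]; destruct (conf N P ord chi0 t); reflexivity. Qed.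

Lemma total_tokens_le N P ord chi0 M t : nsum (seq 0 N) chi0 = M ->
  (nsum (seq 0 N) (chi N P ord chi0 t) <= M)%nat.
Proof.
  intro HM; induction t as [|t IH]; [unfold chi; simpl; lia|].
  rewrite (nsum_ext _ _ _ (chi_S N P ord chi0 t)), nsum_swap.
  eapply Nat.le_trans; [|exact IH]; apply nsum_le_mono; intro v; unfold Icount.
  rewrite Nat.add_comm, Nat.add_sub.
  eapply Nat.le_trans; [apply nsum_counts_le, seq_NoDup|]; now rewrite length_seq.
Qed.

Theorem lemma5p6 (N : nat) (P : nat -> nat -> R) (ord : nat -> list nat)
    (chi0 : nat -> nat) (M : nat)
    (HPnn : forall v u, (v < N)%nat -> (u < N)%nat -> 0 <= P v u)
    (HProw : forall v, (v < N)%nat -> rsum (seq 0 N) (fun u => P v u) = 1)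
    (Hord_nodup : forall v, (v < N)%nat -> NoDup (ord v))
    (Hord_nbr : forall v u, (v < N)%nat ->
        (In u (ord v) <-> ((u < N)%nat /\ 0 < P v u)))
    (HM : nsum (seq 0 N) chi0 = M) :
  forall v u t, (v < N)%nat -> (u < N)%nat -> 0 < P v u ->
    Rabs (INR (Zflow N P ord chi0 t v u) - INR (chi N P ord chi0 t v) * P v u)
      <= 2 * lg (INR M + 1).
Proof.
  intros v u t Hv Hu Hp.
  destruct (router_interval N P ord v u (fun w => HPnn v w Hv) (HProw v Hv) (Hord_nodup v Hv)
              (fun w => Hord_nbr v w Hv) Hu Hp) as [a [Ha [Hab Hrouter]]].
  set (s := snd (conf N P ord chi0 t) v); set (c := chi N P ord chi0 t v).
  assert (HZ : INR (Zflow N P ord chi0 t v u) = rsum (seq s c) (hits a (a + P v u))).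
  { unfold Zflow, Icount; fold (chi N P ord chi0 t); fold s c.
    rewrite Nat.add_comm, Nat.add_sub, length_filter_rsum.
    apply rsum_ext, Hrouter. }
  assert (Hc : (c <= M)%nat).
  { eapply Nat.le_trans; [|apply (total_tokens_le N P ord chi0 M t HM)].
    apply nsum_le_term, in_seq; lia. }
  rewrite HZ; replace (P v u) with (a + P v u - a) at 2 by ring.
  eapply Rle_trans; [apply vdc_window_discrepancy; lra|].
  apply Rmult_le_compat_l; [lra|]; apply lg_le; [pose proof (pos_INR c); lra|].
  apply le_INR in Hc; lra.
Qed.
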